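(* Let $G$ be a finite two-player zero-sum extensive form game with perfect recall (players $1,2$, possibly with chance). Let $t\ge 1$ and let $\boldsymbol{\sigma}^0=(\sigma^0_1,\sigma^0_2),\dots,\boldsymbol{\sigma}^t=(\sigma^t_1,\sigma^t_2)$ be any sequence of strategy profiles. Define the alternating-update average regrets $$r^t_1:=\max_{\sigma^*_1}\frac{1}{t}\sum_{i=0}^{t-1}\Bigl(u_1^{(\sigma^*_1,\sigma^i_2)}-u_1^{(\sigma^i_1,\sigma^i_2)}\Bigr),\qquad r^t_2:=\max_{\sigma^*_2}\frac{1}{t}\sum_{i=0}^{t-1}\Bigl(u_2^{(\sigma^{i+1}_1,\sigma^*_2)}-u_2^{(\sigma^{i+1}_1,\sigma^i_2)}\Bigr).$$ If $r^t_1\le\epsilon_1$ and $r^t_2\le\epsilon_2$, then $$\mathrm{expl}\bigl(\bar{\sigma}^{[1,t]}_1,\bar{\sigma}^{[0,t-1]}_2\bigr)\le \epsilon_1+\epsilon_2-\frac{1}{t}\sum_{i=0}^{t-1}\Bigl(u_1^{(\sigma^{i+1}_1,\sigma^i_2)}-u_1^{(\sigma^i_1,\sigma^i_2)}\Bigr).$$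
   Context: A strategy $\sigma_p$ of player $p$ assigns to each information set $I$ of player $p$ a probability distribution over the legal actions $A(I)$. $u_p^{\boldsymbol{\sigma}}$ denotes the expected utility of player $p$ under profile $\boldsymbol{\sigma}$ (chance acting according to its fixed probabilities); zero-sum means $u_1(z)+u_2(z)=0$ at every terminal history $z$. The maxima range over all strategies of the respective player. For strategies $\sigma^a_p,\dots,\sigma^b_p$, the average strategy $\bar{\sigma}^{[a,b]}_p$ is the strategy of player $p$ whose reach (realization) probabilities $\pi_p$ of every history are the uniform average of those of $\sigma^a_p,\dots,\sigma^b_p$ (equivalently, the uniform mixture of these strategies), so that $u^{(\bar\sigma^{[a,b]}_p,\sigma_{-p})}_q=\frac{1}{b-a+1}\sum_{i=a}^b u^{(\sigma^i_p,\sigma_{-p})}_q$ for any opponent strategy. The exploitability of a profile is $\mathrm{expl}(\sigma_1,\sigma_2):=\max_{\sigma^*_1}u_1^{(\sigma^*_1,\sigma_2)}-u_1^{(\sigma_1,\sigma_2)}+\max_{\sigma^*_2}u_2^{(\sigma_1,\sigma^*_2)}-u_2^{(\sigma_1,\sigma_2)}$, which by zero-sum equals $\max_{\sigma^*_1}u_1^{(\sigma^*_1,\sigma_2)}+\max_{\sigma^*_2}u_2^{(\sigma_1,\sigma^*_2)}$. *)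

From HB Require Import structures.
From mathcomp Require Import all_boot all_order all_algebra.
From Stdlib Require List.
Set Implicit Arguments. Unset Strict Implicit. Unset Printing Implicit Defensive.
Import Order.TTheory GRing.Theory Num.Theory.
Local Open Scope ring_scope.

Inductive player := P1 | P2.

(* A finite game tree.  [Leaf u]: terminal history with utility [u] for
   player 1 (player 2 gets [-u]: zero-sum).  [Chance cs]: chance node, child
   [c] reached with probability [p] for each [(p, c)] in [cs].
   [Dec J cs]: decision node in information set [J]; action [a] leads to the
   [a]-th element of [cs]. *)
Inductive tree (R Inf : Type) :=
| Leaf of R
| Chance of seq (R * tree R Inf)
| Dec of Inf & seq (tree R Inf).
Arguments Leaf {R Inf}.
Arguments Chance {R Inf}.
Arguments Dec {R Inf}.

Record efg (R : Type) := EFG {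
  Inf : Type;
  owner : Inf -> player;
  nact : Inf -> nat;          (* number of legal actions A(J) = {0..nact J - 1} *)
  root : tree R Inf }.

(* A step along a history: a chance outcome (with its probability) or
   action [a] taken at information set [J]. *)
Inductive step (R Inf : Type) := CStep of R | AStep of Inf & nat.
Arguments CStep {R Inf}.
Arguments AStep {R Inf}.

Section Game.
Variables (R : realFieldType) (Inf : Type).

Fixpoint hists (t : tree R Inf) : seq (seq (step R Inf)) :=
  [::] :: match t with
  | Leaf _ => [::]
  | Chance cs =>
      (fix go (cs : seq (R * tree R Inf)) := match cs with
        | [::] => [::]
        | (p, c) :: cs' => map (cons (CStep p)) (hists c) ++ go cs' end) cs
  | Dec J cs =>
      (fix go (n : nat) (cs : seq (tree R Inf)) := match cs with
        | [::] => [::]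
        | c :: cs' => map (cons (AStep J n)) (hists c) ++ go n.+1 cs' end) 0%N cs
  end.

Fixpoint terms (t : tree R Inf) : seq (seq (step R Inf) * R) :=
  match t with
  | Leaf u => [:: ([::], u)]
  | Chance cs =>
      (fix go (cs : seq (R * tree R Inf)) := match cs with
        | [::] => [::]
        | (p, c) :: cs' =>
            map (fun z => (CStep p :: z.1, z.2)) (terms c) ++ go cs' end) cs
  | Dec J cs =>
      (fix go (n : nat) (cs : seq (tree R Inf)) := match cs with
        | [::] => [::]
        | c :: cs' =>
            map (fun z => (AStep J n :: z.1, z.2)) (terms c) ++ go n.+1 cs' end) 0%N cs
  end.

Fixpoint decs (t : tree R Inf) : seq (Inf * seq (step R Inf)) :=
  match t with
  | Leaf _ => [::]
  | Chance cs =>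
      (fix go (cs : seq (R * tree R Inf)) := match cs with
        | [::] => [::]
        | (p, c) :: cs' =>
            map (fun d => (d.1, CStep p :: d.2)) (decs c) ++ go cs' end) cs
  | Dec J cs =>
      (J, [::]) ::
      (fix go (n : nat) (cs : seq (tree R Inf)) := match cs with
        | [::] => [::]
        | c :: cs' =>
            map (fun d => (d.1, AStep J n :: d.2)) (decs c) ++ go n.+1 cs' end) 0%N cs
  end.

Variables (owner : Inf -> player) (nact : Inf -> nat).

Definition is_owner (p : player) (J : Inf) : bool :=
  match p, owner J with P1, P1 | P2, P2 => true | _, _ => false end.

Fixpoint wf_tree (t : tree R Inf) : Prop :=
  match t with
  | Leaf _ => True
  | Chance cs =>
      cs <> [::] /\ (forall pc, List.In pc cs -> 0 <= pc.1) /\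
      \sum_(pc <- cs) pc.1 = 1 /\
      (fix go (cs : seq (R * tree R Inf)) := match cs with
        | [::] => True | (_, c) :: cs' => wf_tree c /\ go cs' end) cs
  | Dec J cs =>
      (0 < nact J)%N /\ size cs = nact J /\
      (fix go (cs : seq (tree R Inf)) := match cs with
        | [::] => True | c :: cs' => wf_tree c /\ go cs' end) cs
  end.

Definition own_seq (p : player) (h : seq (step R Inf)) : seq (Inf * nat) :=
  foldr (fun s acc => match s with
    | AStep J a => if is_owner p J then (J, a) :: acc else acc
    | CStep _ => acc end) [::] h.

Definition perfect_recall_tree (t : tree R Inf) : Prop :=
  forall J h h', List.In (J, h) (decs t) -> List.In (J, h') (decs t) ->
    own_seq (owner J) h = own_seq (owner J) h'.

(* behavioural strategies: sigma J a = probability of action a at J *)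
Definition strat := Inf -> nat -> R.

Definition is_strategy (p : player) (s : strat) : Prop :=
  forall J, owner J = p ->
    (forall a, (a < nact J)%N -> 0 <= s J a) /\ \sum_(a < nact J) s J a = 1.

Definition reach (p : player) (s : strat) (h : seq (step R Inf)) : R :=
  \prod_(st <- h) match st with
    | AStep J a => if is_owner p J then s J a else 1
    | CStep _ => 1 end.

Definition creach (h : seq (step R Inf)) : R :=
  \prod_(st <- h) match st with CStep q => q | AStep _ _ => 1 end.

Definition util1 (t : tree R Inf) (s1 s2 : strat) : R :=
  \sum_(z <- terms t) creach z.1 * reach P1 s1 z.1 * reach P2 s2 z.1 * z.2.
Definition util2 (t : tree R Inf) (s1 s2 : strat) : R :=
  \sum_(z <- terms t) creach z.1 * reach P1 s1 z.1 * reach P2 s2 z.1 * (- z.2).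

End Game.
Unset Implicit Arguments.

Definition wf_game {R : realFieldType} (g : efg R) :=
  wf_tree (@nact R g) (root g).
Definition perfect_recall {R : realFieldType} (g : efg R) :=
  perfect_recall_tree (@owner R g) (root g).
Definition Strat {R : realFieldType} (g : efg R) := strat R (Inf g).
Definition is_strat {R : realFieldType} (g : efg R) (p : player) (s : Strat g) :=
  is_strategy (@owner R g) (@nact R g) p s.
Definition u1 {R : realFieldType} (g : efg R) (s1 s2 : Strat g) :=
  util1 (@owner R g) (root g) s1 s2.
Definition u2 {R : realFieldType} (g : efg R) (s1 s2 : Strat g) :=
  util2 (@owner R g) (root g) s1 s2.

Definition is_avg_strat {R : realFieldType} (g : efg R) (p : player)
    (ss : nat -> Strat g) (a b : nat) (sbar : Strat g) : Prop :=
  is_strat g p sbar /\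
  forall h, List.In h (hists (root g)) ->
    reach (@owner R g) p sbar h =
      (b - a + 1)%:R^-1 * \sum_(a <= i < b.+1) reach (@owner R g) p (ss i) h.

(* exploitability, written as in the paper (max of a sum = sum of maxes) *)
Definition expl_le {R : realFieldType} (g : efg R) (s1 s2 : Strat g) (c : R) : Prop :=
  forall x1 x2 : Strat g, is_strat g P1 x1 -> is_strat g P2 x2 ->
    (u1 g x1 s2 - u1 g s1 s2) + (u2 g s1 x2 - u2 g s1 s2) <= c.

From HB Require Import structures.
From mathcomp Require Import all_boot all_order all_algebra.
From mathcomp Require Import ring lra.
Import Order.TTheory GRing.Theory Num.Theory.
Local Open Scope ring_scope.

(* Expected utility is linear in the reach probabilities of each player at the
   terminal histories, so playing against an average strategy yields the
   average of the utilities against its constituents.  In the exploitability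
   of (sb1, sb2) the terms u1(sb1, sb2) and u2(sb1, sb2) cancel by zero-sum,
   leaving u1(x1, sb2) + u2(sb1, x2), i.e. the average over the iterations of
   u1(x1, s2_i) + u2(s1_(i+1), x2).  Subtracting the average of
   u1(s1_i, s2_i) and of u2(s1_(i+1), s2_i) = - u1(s1_(i+1), s2_i) exhibits
   the two regrets plus the alternation gain, which gives the bound. *)

Lemma eq_big_In (T I : Type) (idx : T) (op : T -> T -> T) (r : seq I)
    (F G : I -> T) :
  (forall i, List.In i r -> F i = G i) ->
  \big[op/idx]_(i <- r) F i = \big[op/idx]_(i <- r) G i.
Proof.
elim: r => [|i r IHr] eqFG; first by rewrite !big_nil.
rewrite !big_cons eqFG /=; last by left.
by rewrite IHr // => j rj; apply: eqFG; right.
Qed.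

Section Utility.
Variables (R : realFieldType) (Inf : Type) (owner : Inf -> player).

Lemma In_terms_hists (t : tree R Inf) z :
  List.In z (terms t) -> List.In z.1 (hists t).
Proof.
move: t z; fix IH 1; case=> [u|cs|J cs] z /=.
- by case=> [<-|[]]; left.
- move=> zcs; right; move: cs z zcs; fix go 1; case=> [|[p c] cs] z //=.
  rewrite !List.in_app_iff !List.in_map_iff.
  case=> [[z' [<- z'c]]|zcs]; last by right; apply: go.
  by left; exists z'.1; split=> //; apply: IH.
- move=> zcs; right; move: 0%N cs z zcs; fix go 2 => n; case=> [|c cs] z //=.
  rewrite !List.in_app_iff !List.in_map_iff.
  case=> [[z' [<- z'c]]|zcs]; last by right; apply: go.
  by left; exists z'.1; split=> //; apply: IH.
Qed.

Lemma util2E (t : tree R Inf) s1 s2 : util2 owner t s1 s2 = - util1 owner t s1 s2.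
Proof. by rewrite /util2 /util1 -sumrN; apply: eq_bigr => z _; ring. Qed.

Lemma util1_mix2 (t : tree R Inf) x (ss : nat -> strat R Inf) sb c r :
  (forall h, List.In h (hists t) ->
     reach owner P2 sb h = c * \sum_(i <- r) reach owner P2 (ss i) h) ->
  util1 owner t x sb = c * \sum_(i <- r) util1 owner t x (ss i).
Proof.
move=> reach_sb; rewrite /util1 exchange_big mulr_sumr /=.
apply: eq_big_In => z /In_terms_hists /reach_sb ->.
by rewrite !mulr_sumr !mulr_suml; apply: eq_bigr => i _; ring.
Qed.

Lemma util2_mix1 (t : tree R Inf) x (ss : nat -> strat R Inf) sb c r :
  (forall h, List.In h (hists t) ->
     reach owner P1 sb h = c * \sum_(i <- r) reach owner P1 (ss i) h) ->
  util2 owner t sb x = c * \sum_(i <- r) util2 owner t (ss i) x.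
Proof.
move=> reach_sb; rewrite /util2 exchange_big mulr_sumr /=.
apply: eq_big_In => z /In_terms_hists /reach_sb ->.
by rewrite !mulr_sumr !mulr_suml; apply: eq_bigr => i _; ring.
Qed.

End Utility.

Section Game.
Context {R : realFieldType} {g : efg R}.

Lemma u2E (s1 s2 : Strat g) : u2 g s1 s2 = - u1 g s1 s2.
Proof. exact: util2E. Qed.

Lemma expl_leE (s1 s2 : Strat g) c :
  expl_le g s1 s2 c <->
  (forall x1 x2 : Strat g, is_strat g P1 x1 -> is_strat g P2 x2 ->
     u1 g x1 s2 + u2 g s1 x2 <= c).
Proof.
by split=> le_c x1 x2 x1P x2P; have := le_c _ _ x1P x2P; rewrite !u2E; lra.
Qed.

Lemma u1_avg_strat2 x {ss : nat -> Strat g} {a b sb} :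
  is_avg_strat g P2 ss a b sb ->
  u1 g x sb = (b - a + 1)%:R^-1 * \sum_(a <= i < b.+1) u1 g x (ss i).
Proof. by case=> _; apply: util1_mix2. Qed.

Lemma u2_avg_strat1 x {ss : nat -> Strat g} {a b sb} :
  is_avg_strat g P1 ss a b sb ->
  u2 g sb x = (b - a + 1)%:R^-1 * \sum_(a <= i < b.+1) u2 g (ss i) x.
Proof. by case=> _; apply: util2_mix1. Qed.

End Game.

Theorem theorem1 (R : realFieldType) (g : efg R)
  (Hwf : wf_game g) (Hpr : perfect_recall g)
  (t : nat) (ht : (1 <= t)%N)
  (s1 s2 : nat -> Strat g)
  (Hs1 : forall i, (i <= t)%N -> is_strat g P1 (s1 i))
  (Hs2 : forall i, (i <= t)%N -> is_strat g P2 (s2 i))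
  (e1 e2 : R)
  (Hr1 : forall x1 : Strat g, is_strat g P1 x1 ->
     t%:R^-1 * \sum_(i < t) (u1 g x1 (s2 i) - u1 g (s1 i) (s2 i)) <= e1)
  (Hr2 : forall x2 : Strat g, is_strat g P2 x2 ->
     t%:R^-1 * \sum_(i < t) (u2 g (s1 i.+1) x2 - u2 g (s1 i.+1) (s2 i)) <= e2)
  (sb1 sb2 : Strat g)
  (Hb1 : is_avg_strat g P1 s1 1 t sb1)
  (Hb2 : is_avg_strat g P2 s2 0 t.-1 sb2) :
  expl_le g sb1 sb2
    (e1 + e2 - t%:R^-1 * \sum_(i < t) (u1 g (s1 i.+1) (s2 i) - u1 g (s1 i) (s2 i))).
Proof.
apply/expl_leE => x1 x2 x1P x2P.
have avg2 : u1 g x1 sb2 = t%:R^-1 * \sum_(i < t) u1 g x1 (s2 i).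
  by rewrite (u1_avg_strat2 x1 Hb2) subn0 addn1 prednK // big_mkord.
have avg1 : u2 g sb1 x2 = t%:R^-1 * \sum_(i < t) u2 g (s1 i.+1) x2.
  by rewrite (u2_avg_strat1 x2 Hb1) subnK // big_add1 big_mkord.
have zero_sum : \sum_(i < t) u2 g (s1 i.+1) (s2 i) =
                - \sum_(i < t) u1 g (s1 i.+1) (s2 i).
  by rewrite -sumrN; apply: eq_bigr => i _; rewrite u2E.
have := Hr1 _ x1P; have := Hr2 _ x2P.
rewrite avg1 avg2 !big_split /= !sumrN zero_sum.
lra.
Qed.
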